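(* An admissible configuration exists for any affine positive normal monoid $M$ with $\operatorname{rank}(M)\ge2$ and any extremal generator $m\in M$.
   Context: Monoids are commutative, cancellative, with unit. An affine monoid is a finitely generated monoid whose group of differences $\operatorname{gp}(M)$ is torsion free; it is positive if it has no nontrivial units; it is normal if $x\in\operatorname{gp}(M)$ and $nx\in M$ for some $n\in\mathbb N$ imply $x\in M$. Let $M$ be an affine positive normal monoid of rank $r$, with $\operatorname{gp}(M)$ identified with $\mathbb Z^r$. For a rational affine hyperplane $\mathcal H\subset\mathbb R^r\setminus\{0\}$ with $\mathbb R_+M=\mathbb R_+\big((\mathbb R_+M)\cap\mathcal H\big)$, put $\Phi(L)=(\mathbb R_+L)\cap\mathcal H$ for a submonoid $L\subset M$, $\Phi(x)=(\mathbb R_+x)\cap\mathcal H$ for a nonzero $x\in M$, and, for a convex set $P\subset\mathcal H$, $M(P)=\{z\in\mathbb Z^r\setminus\{0\}\mid(\mathbb R_+z)\cap\mathcal H\in P\}\cup\{0\}$. An element $m\in M$ is an extremal generator if $\Phi(m)$ is a vertex of $\Phi(M)$ and $m$ generates $(\mathbb R_+m)\cap M\cong\mathbb Z_+$. For polytopes $P\subset Q$ sharing a vertex $v$, $Q$ is tangent to $P$ at $v$ if $\dim P=\dim Q$ and the corner cones spanned by $P$ and $Q$ at $v$ coincide. A pyramid with apex $v$ and base $P$ is $\operatorname{conv}(v,P)$ with $v\notin\operatorname{Aff}(P)$. For an extremal generator $m\in M$, a triple $(\mathcal H,\Delta_1,\Delta_2)$ is an admissible configuration if $\mathcal H\subset\mathbb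 R^r\setminus\{0\}$ is a rational affine hyperplane with $\mathbb R_+M=\mathbb R_+\big((\mathbb R_+M)\cap\mathcal H\big)$, and $\Delta_1,\Delta_2\subset\mathcal H$ are rational pyramids with apex $\Phi(m)$ such that: (a) $\Phi(M)\subset\Delta_1\subset\Delta_2$; (b) $\Delta_1$ and $\Delta_2$ are tangent to $\Phi(M)$ at $\Phi(m)$; (c) $M(\Delta_1)=\mathbb Z_+m+M(F_1)$, where $F_1\subset\Delta_1$ is the facet opposite to $\Phi(m)$; (d) $M(\Delta_2)=\mathbb Z_+m+M(F_2)$, where $F_2\subset\Delta_2$ is the facet opposite to $\Phi(m)$; (e) $F_2\cap\Phi(M)=\emptyset$. *)

From HB Require Import structures.
From mathcomp Require Import all_boot all_order all_algebra.
From mathcomp Require Import reals.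
Set Implicit Arguments. Unset Strict Implicit. Unset Printing Implicit Defensive.
Import Order.TTheory GRing.Theory Num.Theory.
Local Open Scope ring_scope.

Section Defs.
Variables (R : realType) (r : nat).

Notation vec := 'rV[R]_r.

Definition zR (z : 'rV[int]_r) : vec := map_mx (fun k : int => k%:~R) z.
Definition qR (q : 'rV[rat]_r) : vec := map_mx (fun k : rat => ratr k) q.

Definition dot (x y : vec) : R := \sum_(i < r) x 0 i * y 0 i.

Definition hyperplane (a : 'rV[rat]_r) (b : rat) : vec -> Prop :=
  fun x => dot (qR a) x = ratr b.

Definition ray (x : vec) : vec -> Prop :=
  fun y => exists t : R, 0 <= t /\ y = t *: x.

Definition cone (S : vec -> Prop) : vec -> Prop :=
  fun x => exists (s : seq vec) (t : 'I_(size s) -> R),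
    (forall y, y \in s -> S y) /\ (forall i, 0 <= t i) /\
    x = \sum_(i < size s) t i *: s`_i.

Definition conv (s : seq vec) : vec -> Prop :=
  fun x => exists t : 'I_(size s) -> R,
    (forall i, 0 <= t i) /\ \sum_(i < size s) t i = 1 /\
    x = \sum_(i < size s) t i *: s`_i.

Definition aff (s : seq vec) : vec -> Prop :=
  fun x => exists t : 'I_(size s) -> R,
    \sum_(i < size s) t i = 1 /\ x = \sum_(i < size s) t i *: s`_i.

Definition vertex (C : vec -> Prop) (v : vec) : Prop :=
  C v /\ exists l : vec, forall y, C y -> y <> v -> dot l y < dot l v.

Definition aff_indep_in (C : vec -> Prop) (d : nat) : Prop :=
  exists (p0 : vec) (ps : seq vec),
    C p0 /\ (forall p, p \in ps -> C p) /\ size ps = d /\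
    free [seq p - p0 | p <- ps].

Definition has_dim (C : vec -> Prop) (d : nat) : Prop :=
  aff_indep_in C d /\ ~ aff_indep_in C d.+1.

Definition corner (C : vec -> Prop) (v : vec) : vec -> Prop :=
  fun x => exists (t : R) (y : vec), 0 <= t /\ C y /\ x = t *: (y - v).

Definition set_eq (A B : vec -> Prop) := forall x, A x <-> B x.
Definition subset (A B : vec -> Prop) := forall x, A x -> B x.

Definition tangent (P Q : vec -> Prop) (v : vec) : Prop :=
  subset P Q /\ vertex P v /\ vertex Q v /\
  (exists d, has_dim P d /\ has_dim Q d) /\ set_eq (corner P v) (corner Q v).

Variable M : 'rV[int]_r -> Prop.

Definition affine_positive_normal : Prop :=
  (* finitely generated (hence a submonoid of Z^r) *)
  (exists gens : seq 'rV[int]_r, forall z,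
      M z <-> exists c : 'I_(size gens) -> nat,
                z = \sum_(i < size gens) gens`_i *+ c i) /\
  (forall z : 'rV[int]_r, exists x y, M x /\ M y /\ z = x - y) /\
  (forall x, M x -> M (- x) -> x = 0) /\
  (forall (z : 'rV[int]_r) (n : nat), (0 < n)%N -> M (z *+ n) -> M z).

Definition imM : vec -> Prop := fun x => exists z, M z /\ x = zR z.

Definition PhiM (H : vec -> Prop) : vec -> Prop := fun x => cone imM x /\ H x.

Definition Phi_pt (H : vec -> Prop) (z : 'rV[int]_r) (v : vec) : Prop :=
  forall y, (ray (zR z) y /\ H y) <-> y = v.

Definition good_hyperplane (a : 'rV[rat]_r) (b : rat) : Prop :=
  a != 0 /\ b != 0 /\ set_eq (cone imM) (cone (PhiM (hyperplane a b))).

Definition MP (H P : vec -> Prop) : 'rV[int]_r -> Prop :=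
  fun z => z = 0 \/ (z <> 0 /\ exists y, ray (zR z) y /\ H y /\ P y).

Definition extremal_generator (m : 'rV[int]_r) : Prop :=
  M m /\
  (exists a b v, good_hyperplane a b /\ Phi_pt (hyperplane a b) m v /\
                 vertex (PhiM (hyperplane a b)) v) /\
  (forall z, M z -> (ray (zR m) (zR z) <-> exists k : nat, z = m *+ k)).

Definition rational_pyramid (H : vec -> Prop) (v : vec) (base : seq 'rV[rat]_r) : Prop :=
  H v /\ (forall q, q \in base -> H (qR q)) /\ ~ aff (map qR base) v.

Definition pyramid (v : vec) (base : seq 'rV[rat]_r) : vec -> Prop :=
  conv (v :: map qR base).

Definition facet_opp (base : seq 'rV[rat]_r) : vec -> Prop := conv (map qR base).

Definition admissible_configuration (m : 'rV[int]_r) : Prop :=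
  exists (a : 'rV[rat]_r) (b : rat) (v : vec) (base1 base2 : seq 'rV[rat]_r),
    let H := hyperplane a b in
    let D1 := pyramid v base1 in
    let D2 := pyramid v base2 in
    let F1 := facet_opp base1 in
    let F2 := facet_opp base2 in
    good_hyperplane a b /\ Phi_pt H m v /\
    rational_pyramid H v base1 /\ rational_pyramid H v base2 /\
    subset (PhiM H) D1 /\ subset D1 D2 /\
    tangent (PhiM H) D1 v /\ tangent (PhiM H) D2 v /\
    (forall z, MP H D1 z <-> exists (k : nat) w, MP H F1 w /\ z = m *+ k + w) /\
    (forall z, MP H D2 z <-> exists (k : nat) w, MP H F2 w /\ z = m *+ k + w) /\
    (forall x, F2 x -> ~ PhiM H x).

End Defs.

From HB Require Import structures.
From mathcomp Require Import all_boot all_order all_algebra.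
From mathcomp Require Import reals lra.
Set Implicit Arguments. Unset Strict Implicit. Unset Printing Implicit Defensive.
Import Order.TTheory GRing.Theory Num.Theory.
Local Open Scope ring_scope.

(* Let Phi(y) = y / a(y) be the section by a hyperplane H = {a = 1}.
   Separating the vertex Phi(m) from the rest of the section and rounding
   gives an integral form g with g(m) = 0 and g > 0 on every generator off
   the ray of m (by rank >= 2 there is one); normality makes m primitive,
   which gives an integral h with h(m) = 1, made nonnegative on the
   generators by adding a multiple of g.  For a = h + c g, seen from Phi(m)
   each generator y with g(y) > 0 projects to the point
   (y - h(y) m) / (c g(y)) of the face {h = 0} of H; with Phi(m) these points
   span a pyramid containing Phi(M) and tangent to it at Phi(m), and a
   lattice point z over the pyramid is h(z) m plus a lattice point over its
   base.  As h + 2g = (h + g) + g, the choices (h, 2) and (h + g, 1) give the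
   same H, the first pyramid lies in the second (its base points are
   midpoints towards Phi(m)), and a <= 2 (h + g) on the generators keeps the
   second base {h + g = 0} away from Phi(M), where h + g >= 1/2. *)

Section LinearForms.
Variables (R : realType) (r : nat).
Notation vec := 'rV[R]_r.
Implicit Types (x y z : vec) (a b : 'rV[int]_r).

Lemma dotDr x y z : dot x (y + z) = dot x y + dot x z.
Proof. by rewrite /dot -big_split; apply: eq_bigr => i _; rewrite mxE mulrDr. Qed.

Lemma dotDl x y z : dot (x + y) z = dot x z + dot y z.
Proof. by rewrite /dot -big_split; apply: eq_bigr => i _; rewrite mxE mulrDl. Qed.

Lemma dotZr (k : R) x y : dot x (k *: y) = k * dot x y.
Proof. by rewrite /dot mulr_sumr; apply: eq_bigr => i _; rewrite mxE mulrCA. Qed.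

Lemma dotZl (k : R) x y : dot (k *: x) y = k * dot x y.
Proof. by rewrite /dot mulr_sumr; apply: eq_bigr => i _; rewrite mxE mulrA. Qed.

Lemma dot0r x : dot x 0 = 0.
Proof. by rewrite /dot big1 // => i _; rewrite mxE mulr0. Qed.

Lemma dot0l x : dot 0 x = 0.
Proof. by rewrite /dot big1 // => i _; rewrite mxE mul0r. Qed.

Lemma dotNr x y : dot x (- y) = - dot x y.
Proof. by rewrite -scaleN1r dotZr mulN1r. Qed.

Lemma dotNl x y : dot (- x) y = - dot x y.
Proof. by rewrite -scaleN1r dotZl mulN1r. Qed.

Lemma dotBr x y z : dot x (y - z) = dot x y - dot x z.
Proof. by rewrite dotDr dotNr. Qed.

Lemma dotBl x y z : dot (x - y) z = dot x z - dot y z.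
Proof. by rewrite dotDl dotNl. Qed.

Lemma dot_sumr x I (s : seq I) (P : pred I) (F : I -> vec) :
  dot x (\sum_(i <- s | P i) F i) = \sum_(i <- s | P i) dot x (F i).
Proof. exact: (big_morph _ (dotDr x) (dot0r x)). Qed.

Lemma dot_sumZr x (w : nat -> R) (Y : nat -> vec) k :
  dot x (\sum_(0 <= i < k) w i *: Y i) = \sum_(0 <= i < k) w i * dot x (Y i).
Proof. by rewrite dot_sumr; apply: eq_bigr => i _; rewrite dotZr. Qed.

Lemma zR0 : zR R (0 : 'rV[int]_r) = 0.
Proof. by apply/rowP => i; rewrite !mxE. Qed.

Lemma zRD a b : zR R (a + b) = zR R a + zR R b.
Proof. by apply/rowP => i; rewrite !mxE intrD. Qed.

Lemma zRB a b : zR R (a - b) = zR R a - zR R b.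
Proof. by apply/rowP => i; rewrite !mxE intrB. Qed.

Lemma zRMn a n : zR R (a *+ n) = zR R a *+ n.
Proof. by apply/rowP => i; rewrite mulmxnE !mxE mulmxnE rmorphMn. Qed.

Lemma zR_sum I (s : seq I) (P : pred I) (F : I -> 'rV[int]_r) :
  zR R (\sum_(i <- s | P i) F i) = \sum_(i <- s | P i) zR R (F i).
Proof. exact: (big_morph _ zRD zR0). Qed.

Lemma zR_inj : injective (@zR R r).
Proof. by move=> a b /rowP h; apply/rowP => i; have := h i; rewrite !mxE => /intr_inj. Qed.

Definition zdot a b : int := \sum_i a 0 i * b 0 i.

Lemma dot_zR a b : dot (zR R a) (zR R b) = (zdot a b)%:~R.
Proof. by rewrite /dot /zdot rmorph_sum; apply: eq_bigr => i _; rewrite !mxE rmorphM. Qed.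

End LinearForms.

Section IntegerForms.
Variable r : nat.
Implicit Types a b c : 'rV[int]_r.

Lemma zdotDl a b c : zdot (a + b) c = zdot a c + zdot b c.
Proof. by rewrite /zdot -big_split; apply: eq_bigr => i _; rewrite mxE mulrDl. Qed.

Lemma zdot0r a : zdot a 0 = 0.
Proof. by rewrite /zdot big1 // => i _; rewrite mxE mulr0. Qed.

Lemma zdotMnl a b n : zdot (a *+ n) b = zdot a b *+ n.
Proof. by rewrite /zdot -sumrMnl; apply: eq_bigr => i _; rewrite mulmxnE mulrnAl. Qed.

Lemma zdotMnr a b n : zdot a (b *+ n) = zdot a b *+ n.
Proof. by rewrite /zdot -sumrMnl; apply: eq_bigr => i _; rewrite mulmxnE mulrnAr. Qed.

Lemma zdotZl (k : int) a b : zdot (k *: a) b = k * zdot a b.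
Proof. by rewrite /zdot mulr_sumr; apply: eq_bigr => i _; rewrite mxE mulrA. Qed.

Lemma zdot_delta a j : zdot (delta_mx 0 j) a = a 0 j.
Proof.
rewrite /zdot (bigD1 j) //= big1 ?addr0 => [|i ij]; rewrite !mxE.
  by rewrite !eqxx mul1r.
by rewrite (negbTE ij) andbF mul0r.
Qed.

Lemma zdot_self_gt0 a : a != 0 -> 0 < zdot a a.
Proof.
move=> anz; have sq_ge0 (i : 'I_r) : true -> 0 <= a 0 i * a 0 i.
  by move=> _; rewrite -expr2 sqr_ge0.
rewrite lt_neqAle sumr_ge0 // andbT; apply/negP => /eqP h.
move/eqP: anz; apply; apply/rowP => k; rewrite mxE.
have /eqP := @psumr_eq0P _ _ _ _ sq_ge0 (esym h) k isT.
by rewrite mulf_eq0 orbb => /eqP.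
Qed.

End IntegerForms.

Lemma psumr_nat_eq0 (R : numDomainType) n (F : nat -> R) :
  (forall i, 0 <= F i) -> \sum_(0 <= i < n) F i = 0 -> forall i, (i < n)%N -> F i = 0.
Proof.
move=> F0; rewrite big_mkord => h i lt_in.
exact: (@psumr_eq0P _ _ xpredT (fun i : 'I_n => F i) (fun i _ => F0 i) h (Ordinal lt_in)).
Qed.

Section ConvexGeometry.
Variables (R : realType) (r : nat).
Notation vec := 'rV[R]_r.

(* Weights indexed by ['I_n] are re-indexed by [nat], so that the interval
   sums [\sum_(0 <= i < n)] can be split and shifted freely. *)
Definition nat_weights n (t : 'I_n -> R) (k : nat) : R :=
  if insub k is Some i then t i else 0.

Lemma nat_weightsE n (t : 'I_n -> R) (i : 'I_n) : nat_weights t i = t i.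
Proof. by rewrite /nat_weights valK. Qed.

Lemma nat_weights_ge0 n (t : 'I_n -> R) :
  (forall i, 0 <= t i) -> forall k, 0 <= nat_weights t k.
Proof. by move=> t0 k; rewrite /nat_weights; case: insubP => // i _ _; apply: t0. Qed.

Lemma sum_nat_weights n (t : 'I_n -> R) :
  \sum_(i < n) t i = \sum_(0 <= i < n) nat_weights t i.
Proof. by rewrite big_mkord; apply: eq_bigr => i _; rewrite nat_weightsE. Qed.

Lemma sumZ_nat_weights n (t : 'I_n -> R) (F : nat -> vec) :
  \sum_(i < n) t i *: F i = \sum_(0 <= i < n) nat_weights t i *: F i.
Proof. by rewrite big_mkord; apply: eq_bigr => i _; rewrite nat_weightsE. Qed.

Lemma conv_natE (s : seq vec) y : conv s y <->
  exists w : nat -> R, (forall i, 0 <= w i) /\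
    \sum_(0 <= i < size s) w i = 1 /\ y = \sum_(0 <= i < size s) w i *: s`_i.
Proof.
split.
  case=> t [t0 [t1 ->]]; exists (nat_weights t); split; first exact: nat_weights_ge0.
  by rewrite -sum_nat_weights -sumZ_nat_weights.
case=> w [w0 [w1 ->]]; exists (fun i => w i).
by rewrite -w1 !big_mkord.
Qed.

Lemma cone_natE (S : vec -> Prop) y : cone S y <->
  exists (s : seq vec) (w : nat -> R), (forall z, z \in s -> S z) /\
    (forall i, 0 <= w i) /\ y = \sum_(0 <= i < size s) w i *: s`_i.
Proof.
split.
  case=> s [t [sS [t0 ->]]]; exists s, (nat_weights t).
  by rewrite -sumZ_nat_weights; split => //; split => //; apply: nat_weights_ge0.
case=> s [w [sS [w0 ->]]]; exists s, (fun i => w i).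
by rewrite big_mkord.
Qed.

Lemma conv_cons_natE v (s : seq vec) y : conv (v :: s) y <->
  exists (l0 : R) (w : nat -> R), 0 <= l0 /\ (forall i, 0 <= w i) /\
    l0 + \sum_(0 <= i < size s) w i = 1 /\
    y = l0 *: v + \sum_(0 <= i < size s) w i *: s`_i.
Proof.
rewrite conv_natE /=; split.
  case=> w [w0 [w1 ->]]; exists (w 0%N), (fun i => w i.+1).
  by rewrite big_nat_recl // in w1; rewrite big_nat_recl.
case=> l0 [w [l00 [w0 [w1 ->]]]].
exists (fun k => if k is k'.+1 then w k' else l0); split; first by case.
by rewrite !big_nat_recl.
Qed.

Lemma aff_indep_inS (C C' : vec -> Prop) d :
  (forall y, C y -> C' y) -> aff_indep_in C d -> aff_indep_in C' d.
Proof.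
move=> sCC' [p0 [ps [Cp0 [Cps rest]]]]; exists p0, ps.
by split; [exact: sCC' | split => // p /Cps; apply: sCC'].
Qed.

(* The differences of points of [C] lie in [ker L], a proper subspace since
   [dot L u != 0]. *)
Lemma level_set_not_aff_indep (L u : vec) (C : vec -> Prop) :
  dot L u != 0 -> (forall y, C y -> dot L y = 1) -> ~ aff_indep_in C r.
Proof.
move=> Lu CL [p0 [ps [Cp0 [Cps [size_ps free_ps]]]]].
set Y := [seq p - p0 | p <- ps].
have dimY : \dim <<Y>> = r by move: free_ps; rewrite /free size_map size_ps => /eqP.
have fullY : <<Y>>%VS = fullv.
  by apply/eqP; rewrite eqEdim subvf dimvf dim_matrix mul1r dimY leqnn.
have /coord_span uE : u \in <<in_tuple Y>>%VS by rewrite fullY memvf.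
have : dot L u = 0.
  rewrite uE dot_sumr big1 // => i _; rewrite dotZr.
  have : (in_tuple Y)`_i \in Y by rewrite mem_nth // size_tuple.
  by case/mapP => p p_in ->; rewrite dotBr !CL ?subrr ?mulr0 //; exact: Cps.
by move/eqP; rewrite (negbTE Lu).
Qed.

Lemma cone_form_ge0 (S : vec -> Prop) (L : vec) :
  (forall y, S y -> 0 <= dot L y) -> forall x, cone S x -> 0 <= dot L x.
Proof.
move=> SL x /cone_natE [s [w [sS [w0 ->]]]]; rewrite dot_sumZr big_nat_cond.
by apply: sumr_ge0 => i /andP [/andP [_ lt_i] _]; rewrite mulr_ge0 // SL //; exact/sS/mem_nth.
Qed.

Lemma cone_form_eq0 (S : vec -> Prop) (L v : vec) :
  dot L v = 0 -> (forall y, S y -> y <> v -> 0 < dot L y) ->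
  forall x, cone S x -> dot L x = 0 -> ray v x.
Proof.
move=> Lv SL x /cone_natE [s [w [sS [w0 ex]]]] Lx.
have SL0 y : S y -> 0 <= dot L y.
  by move=> Sy; case: (eqVneq y v) => [->|/eqP ne]; [rewrite Lv | exact/ltW/SL].
have term_ge0 i : 0 <= w i * dot L s`_i.
  case: (ltnP i (size s)) => [lt_i|ge_i]; last by rewrite nth_default // dot0r mulr0.
  by rewrite mulr_ge0 // SL0 //; exact/sS/mem_nth.
have sum0 : \sum_(0 <= i < size s) w i * dot L s`_i = 0 by rewrite -dot_sumZr -ex.
have terms0 := psumr_nat_eq0 term_ge0 sum0.
exists (\sum_(0 <= i < size s) w i); split; first exact: sumr_ge0.
rewrite ex scaler_suml; apply: eq_big_nat => i /andP [_ lt_i].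
have /eqP := terms0 i lt_i; rewrite mulf_eq0 => /orP [/eqP ->|/eqP Ls0].
  by rewrite !scale0r.
case: (eqVneq s`_i v) => [->//|/eqP ne].
by move: (SL _ (sS _ (mem_nth 0 lt_i)) ne); rewrite Ls0 ltxx.
Qed.

Lemma MP_level1E (a : 'rV[rat]_r) (P : vec -> Prop) (z : 'rV[int]_r) :
  MP (hyperplane a 1) P z <-> z = 0 \/
    (z <> 0 /\ 0 < dot (qR R a) (zR R z) /\ P ((dot (qR R a) (zR R z))^-1 *: zR R z)).
Proof.
set L := qR R a; rewrite /MP /hyperplane rmorph1; split; case=> [->|[nz Pz]]; try by left.
  case: Pz => y [[t [t0 ->]] [Ly Py]]; right; split => //.
  move: Ly; rewrite dotZr -/L => Ly.
  have tnz : t != 0.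
    by apply/eqP => t0'; move: Ly; rewrite t0' mul0r => /eqP; rewrite eq_sym oner_eq0.
  have -> : dot L (zR R z) = t^-1 by apply: (mulfI tnz); rewrite Ly mulfV.
  by rewrite invrK invr_gt0 lt_neqAle eq_sym tnz t0.
case: Pz => Lz PLz; right; split => //.
exists ((dot L (zR R z))^-1 *: zR R z); split => //.
  by exists (dot L (zR R z))^-1; rewrite invr_ge0 ltW.
by rewrite dotZr mulVf ?gt_eqF.
Qed.

End ConvexGeometry.

Lemma free_subseq_span (K : fieldType) (vT : vectType K) (X : seq vT) :
  exists Y, {subset Y <= X} /\ free Y /\ (<<X>> <= <<Y>>)%VS.
Proof.
elim: X => [|x X [Y [sYX [freeY sXY]]]].
  by exists [::]; rewrite nil_free span_nil sub0v.
case: (boolP (x \in <<Y>>%VS)) => xY.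
  exists Y; split; first by move=> y /sYX; rewrite inE => ->; rewrite orbT.
  by split => //; rewrite span_cons subv_add -memvE xY sXY.
exists (x :: Y); split.
  by move=> y; rewrite !inE => /orP [->|/sYX ->] //; rewrite orbT.
by rewrite free_cons xY freeY !span_cons addvS.
Qed.

Definition zQ r (z : 'rV[int]_r) : 'rV[rat]_r := map_mx (fun k : int => k%:~R) z.

Lemma qR_zQ (R : realType) r (z : 'rV[int]_r) : qR R (zQ z) = zR R z.
Proof. by apply/rowP => i; rewrite !mxE ratr_int. Qed.

(* Generators with [g = 0], i.e. on the ray of [m], are replaced by [xstar]
   so that every base point is defined. *)
Definition base_gen r (g xstar x : 'rV[int]_r) := if 0 < zdot g x then x else xstar.

(* For [h m = 1], [g m = 0] and [a = h + c g], the point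
   [(y - h(y) m) / (c g(y))] is where the ray in [a = 1] from [m] through
   [y / a(y)] meets the face [h = 0]. *)
Definition base_pointQ r (m h g : 'rV[int]_r) (c : nat) (y : 'rV[int]_r) : 'rV[rat]_r :=
  (c%:R * (zdot g y)%:~R)^-1 *: (zQ y - (zdot h y)%:~R *: zQ m).

Definition pyramid_base r (m h g : 'rV[int]_r) c xstar (xs : seq 'rV[int]_r) :=
  [seq base_pointQ m h g c (base_gen g xstar x) | x <- xs].

Lemma qR_base_point (R : realType) r (m h g : 'rV[int]_r) c y :
  qR R (base_pointQ m h g c y) =
  (c%:R * (zdot g y)%:~R)^-1 *: (zR R y - (zdot h y)%:~R *: zR R m).
Proof.
apply/rowP => i; rewrite !mxE.
by rewrite rmorphM fmorphV rmorphB !rmorphM !rmorph_int rmorph_nat.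
Qed.

Lemma zdot_nth_ge0 r (L : 'rV[int]_r) (xs : seq 'rV[int]_r) i :
  (forall x, x \in xs -> 0 <= zdot L x) -> 0 <= zdot L xs`_i.
Proof.
move=> Lxs; case: (ltnP i (size xs)) => [lt_i|ge_i]; first by rewrite Lxs ?mem_nth.
by rewrite nth_default // zdot0r.
Qed.

Lemma mem_gens r (M : 'rV[int]_r -> Prop) (xs : seq 'rV[int]_r) :
  (forall z, M z <-> exists cf : 'I_(size xs) -> nat, z = \sum_(i < size xs) xs`_i *+ cf i) ->
  forall x, x \in xs -> M x.
Proof.
move=> Mgen x x_in; apply/Mgen; have lt_x : (index x xs < size xs)%N by rewrite index_mem.
exists (fun j => (j == Ordinal lt_x) : nat).
rewrite (bigD1 (Ordinal lt_x)) //= eqxx mulr1n nth_index // big1 ?addr0 //.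
by move=> j /negbTE ->; rewrite mulr0n.
Qed.

Section Pyramid.
Variables (R : realType) (r : nat) (M : 'rV[int]_r -> Prop) (xs : seq 'rV[int]_r).
Variables (m aZ hZ gZ xstar : 'rV[int]_r) (c : nat).
Hypothesis Mgen : forall z, M z <->
  exists cf : 'I_(size xs) -> nat, z = \sum_(i < size xs) xs`_i *+ cf i.
Hypothesis Mm : M m.
Hypothesis c_gt0 : (0 < c)%N.
Hypothesis aZE : aZ = hZ + gZ *+ c.
Hypothesis hm1 : zdot hZ m = 1.
Hypothesis gm0 : zdot gZ m = 0.
Hypothesis g_gt0_or_ray : forall x, x \in xs -> 0 < zdot gZ x \/ exists k, x = m *+ k.
Hypothesis h_ge0 : forall x, x \in xs -> 0 <= zdot hZ x.
Hypothesis xstar_in : xstar \in xs.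
Hypothesis g_xstar_gt0 : 0 < zdot gZ xstar.

Local Notation vec := 'rV[R]_r.
Local Notation v := (zR R m).
Local Notation fa y := (dot (zR R aZ) y).
Local Notation fh y := (dot (zR R hZ) y).
Local Notation H := (@hyperplane R r (zQ aZ) 1).
Local Notation n := (size xs).
Local Notation bp y := (qR R (base_pointQ m hZ gZ c y)).
Local Notation Q i := (bp (base_gen gZ xstar xs`_i)).
Local Notation base := (pyramid_base m hZ gZ c xstar xs).
Local Notation D := (@pyramid R r v base).
Local Notation F := (@facet_opp R r base).

Lemma hyperplaneE y : H y <-> fa y = 1.
Proof. by rewrite /hyperplane qR_zQ rmorph1. Qed.

Lemma zdot_aE x : zdot aZ x = zdot hZ x + zdot gZ x *+ c.
Proof. by rewrite aZE zdotDl zdotMnl. Qed.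

Lemma intr_zdot_a x : ((zdot aZ x)%:~R : R) = (zdot hZ x)%:~R + c%:R * (zdot gZ x)%:~R.
Proof. by rewrite zdot_aE rmorphD rmorphMn mulr_natl. Qed.

Lemma zdot_am : zdot aZ m = 1.
Proof. by rewrite zdot_aE hm1 gm0 mul0rn addr0. Qed.

Lemma fa_v : fa v = 1.
Proof. by rewrite dot_zR zdot_am. Qed.

Lemma fh_v : fh v = 1.
Proof. by rewrite dot_zR hm1. Qed.

Lemma zdot_g_ge0 x : x \in xs -> 0 <= zdot gZ x.
Proof. by move=> /g_gt0_or_ray [/ltW //|[k ->]]; rewrite zdotMnr gm0 mul0rn. Qed.

Lemma zdot_a_ge0 x : x \in xs -> 0 <= zdot aZ x.
Proof. by move=> x_in; rewrite zdot_aE addr_ge0 ?mulrn_wge0 ?h_ge0 ?zdot_g_ge0. Qed.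

Lemma zdot_a_eq0 x : x \in xs -> zdot aZ x = 0 -> x = 0.
Proof.
move=> x_in; case: (g_gt0_or_ray x_in) => [gx|[k ->]].
  rewrite zdot_aE => /eqP; rewrite paddr_eq0 ?mulrn_wge0 ?h_ge0 ?ltW //.
  by case/andP=> _; rewrite mulrn_eq0 (gt_eqF gx) orbF => /eqP c0; move: c_gt0; rewrite c0.
rewrite zdotMnr zdot_am => /eqP; rewrite mulrn_eq0 oner_eq0 orbF => /eqP ->.
by rewrite mulr0n.
Qed.

Lemma zdot_g_base_gen x : 0 < zdot gZ (base_gen gZ xstar x).
Proof. by rewrite /base_gen; case: ifP. Qed.

Lemma base_gen_nth i : base_gen gZ xstar xs`_i \in xs.
Proof.
rewrite /base_gen; case: ifP => // gx; case: (ltnP i n) => [lt_i|ge_i].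
  by rewrite mem_nth.
by move: gx; rewrite nth_default // zdot0r ltxx.
Qed.

Lemma zdot_a_base_gen i : 0 < zdot aZ (base_gen gZ xstar xs`_i).
Proof.
by rewrite zdot_aE ltr_wpDl ?h_ge0 ?base_gen_nth // pmulrn_lgt0 // zdot_g_base_gen.
Qed.

Lemma base_denom_neq0 y : 0 < zdot gZ y -> (c%:R * (zdot gZ y)%:~R : R) != 0.
Proof. by move=> gy; rewrite mulf_neq0 ?pnatr_eq0 -?lt0n ?intr_eq0 ?gt_eqF. Qed.

Lemma fa_base_point y : 0 < zdot gZ y -> fa (bp y) = 1.
Proof.
move=> gy; rewrite qR_base_point dotZr dotBr dotZr !dot_zR zdot_am intr_zdot_a.
by rewrite mulr1 addrAC subrr add0r mulVf // base_denom_neq0.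
Qed.

Lemma fh_base_point y : fh (bp y) = 0.
Proof. by rewrite qR_base_point dotZr dotBr dotZr !dot_zR hm1 mulr1 subrr mulr0. Qed.

Lemma scale_base_point x : x \in xs ->
  (c%:R * (zdot gZ x)%:~R) *: bp (base_gen gZ xstar x) = zR R x - (zdot hZ x)%:~R *: v.
Proof.
move=> x_in; case: (g_gt0_or_ray x_in) => [gx|[k ->]].
  by rewrite /base_gen gx qR_base_point scalerA mulfV ?scale1r // base_denom_neq0.
rewrite !zdotMnr gm0 mul0rn mulr0 scale0r hm1 zRMn rmorphMn rmorph1.
by rewrite scaler_nat subrr.
Qed.

Lemma nth_base i : (i < n)%N -> (map (@qR R r) base)`_i = Q i.
Proof. by move=> lt_i; rewrite (nth_map 0) ?size_map // (nth_map 0). Qed.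

Lemma sum_base (w : nat -> R) :
  \sum_(0 <= i < size (map (@qR R r) base)) w i *: (map (@qR R r) base)`_i =
  \sum_(0 <= i < n) w i *: Q i.
Proof. by rewrite !size_map; apply: eq_big_nat => i /andP [_ /nth_base ->]. Qed.

Lemma pyramid_natE y : D y <-> exists l0 (w : nat -> R), 0 <= l0 /\ (forall i, 0 <= w i) /\
  l0 + \sum_(0 <= i < n) w i = 1 /\ y = l0 *: v + \sum_(0 <= i < n) w i *: Q i.
Proof.
rewrite /pyramid conv_cons_natE; split; case=> l0 [w [l00 [w0 [w1 ->]]]].
  by exists l0, w; rewrite sum_base; rewrite !size_map in w1.
by exists l0, w; rewrite sum_base !size_map.
Qed.

Lemma facet_natE y : F y <-> exists w : nat -> R, (forall i, 0 <= w i) /\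
  \sum_(0 <= i < n) w i = 1 /\ y = \sum_(0 <= i < n) w i *: Q i.
Proof.
rewrite /facet_opp conv_natE; split; case=> w [w0 [w1 ->]].
  by exists w; rewrite sum_base; rewrite !size_map in w1.
by exists w; rewrite sum_base !size_map.
Qed.

Lemma fa_sumQ (w : nat -> R) : fa (\sum_(0 <= i < n) w i *: Q i) = \sum_(0 <= i < n) w i.
Proof.
by rewrite dot_sumZr; apply: eq_bigr => i _; rewrite fa_base_point ?zdot_g_base_gen ?mulr1.
Qed.

Lemma fh_sumQ (w : nat -> R) : fh (\sum_(0 <= i < n) w i *: Q i) = 0.
Proof. by rewrite dot_sumZr big1 // => i _; rewrite fh_base_point mulr0. Qed.

Lemma fa_comb l0 (w : nat -> R) :
  fa (l0 *: v + \sum_(0 <= i < n) w i *: Q i) = l0 + \sum_(0 <= i < n) w i.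
Proof. by rewrite dotDr dotZr fa_v mulr1 fa_sumQ. Qed.

Lemma fh_comb l0 (w : nat -> R) : fh (l0 *: v + \sum_(0 <= i < n) w i *: Q i) = l0.
Proof. by rewrite dotDr dotZr fh_v mulr1 fh_sumQ addr0. Qed.

Definition gen_cone (y : vec) := exists s : nat -> R, (forall i, 0 <= s i) /\
  y = \sum_(0 <= i < n) s i *: zR R xs`_i.

Lemma gen_cone0 : gen_cone 0.
Proof. by exists (fun _ => 0); split => //; rewrite big1 // => i _; rewrite scale0r. Qed.

Lemma gen_coneD y z : gen_cone y -> gen_cone z -> gen_cone (y + z).
Proof.
case=> s [s0 ->] [t [t0 ->]]; exists (fun i => s i + t i); split.
  by move=> i; rewrite addr_ge0.
by rewrite -big_split; apply: eq_bigr => i _; rewrite scalerDl.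
Qed.

Lemma gen_coneZ (k : R) y : 0 <= k -> gen_cone y -> gen_cone (k *: y).
Proof.
move=> k0 [s [s0 ->]]; exists (fun i => k * s i); split.
  by move=> i; rewrite mulr_ge0.
by rewrite scaler_sumr; apply: eq_bigr => i _; rewrite scalerA.
Qed.

Lemma gen_cone_sum (s : nat -> R) (Y : nat -> vec) k :
  (forall i, 0 <= s i) -> (forall i, (i < k)%N -> gen_cone (Y i)) ->
  gen_cone (\sum_(0 <= i < k) s i *: Y i).
Proof.
move=> s0; elim: k => [|k IH] hY; first by rewrite big_nil; exact: gen_cone0.
rewrite big_nat_recr //=; apply: gen_coneD; first by apply: IH => i /ltnW /hY.
by apply: gen_coneZ => //; apply: hY.
Qed.

Lemma gen_cone_M z : M z -> gen_cone (zR R z).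
Proof.
case/Mgen=> cf ->; exists (nat_weights (fun i => (cf i)%:R)); split.
  by apply: nat_weights_ge0 => i; rewrite ler0n.
rewrite zR_sum -(sumZ_nat_weights (fun i : 'I_n => (cf i)%:R) (fun i => zR R xs`_i)).
by apply: eq_bigr => i _; rewrite zRMn scaler_nat.
Qed.

Lemma cone_sub_gen_cone (S : vec -> Prop) y :
  (forall z, S z -> gen_cone z) -> cone S y -> gen_cone y.
Proof.
move=> S_gen /cone_natE [s [w [sS [w0 ->]]]]; apply: gen_cone_sum => // i lt_i.
exact/S_gen/sS/mem_nth.
Qed.

Lemma cone_gen_coneE y : cone (imM M) y <-> gen_cone y.
Proof.
split.
  by apply: cone_sub_gen_cone => _ [z [Mz ->]]; apply: gen_cone_M.
case=> s [s0 ->]; apply/cone_natE; exists (map (@zR R r) xs), s; split.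
  by move=> z /mapP [x x_in ->]; exists x; split => //; apply: mem_gens.
split => //; rewrite size_map; apply: eq_big_nat => i /andP [_ lt_i].
by rewrite (nth_map 0).
Qed.

Lemma PhiME y : PhiM M H y <-> gen_cone y /\ fa y = 1.
Proof. by rewrite /PhiM cone_gen_coneE hyperplaneE. Qed.

Lemma PhiM_v : PhiM M H v.
Proof. by apply/PhiME; split; [exact: gen_cone_M | exact: fa_v]. Qed.

Lemma PhiM_sub_pyramid y : PhiM M H y -> D y.
Proof.
case/PhiME=> [[s [s0 ey]] fy]; apply/pyramid_natE.
exists (\sum_(0 <= i < n) s i * (zdot hZ xs`_i)%:~R).
exists (fun i => s i * (c%:R * (zdot gZ xs`_i)%:~R)).
split; first by apply: sumr_ge0 => i _; rewrite mulr_ge0 // ler0z zdot_nth_ge0.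
split; first by move=> i; rewrite !mulr_ge0 // ler0z zdot_nth_ge0 //; exact: zdot_g_ge0.
split.
  rewrite -[RHS]fy ey dot_sumZr -big_split; apply: eq_bigr => i _.
  by rewrite dot_zR intr_zdot_a mulrDr.
rewrite ey scaler_suml -big_split; apply: eq_big_nat => i /andP [_ lt_i] /=.
by rewrite -scalerA scale_base_point ?mem_nth // scalerBr scalerA addrC subrK.
Qed.

Lemma pyramid_v : D v.
Proof.
apply/pyramid_natE; exists 1, (fun _ => 0); split => //; split => //.
by rewrite !big1 ?addr0 ?scale1r // => i _; rewrite scale0r.
Qed.

Lemma pyramid_fh_lt1 y : D y -> y <> v -> fh y < 1.
Proof.
case/pyramid_natE=> l0 [w [l00 [w0 [w1 ey]]]] ne_yv; rewrite ey fh_comb.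
rewrite lt_neqAle; apply/andP; split; last by rewrite -w1 lerDl sumr_ge0.
apply/eqP => l01; apply: ne_yv.
have w_sum0 : \sum_(0 <= i < n) w i = 0 by apply: (addrI l0); rewrite addr0 w1 l01.
rewrite ey l01 scale1r big_nat_cond big1 ?addr0 // => i /andP [/andP [_ lt_i] _].
by rewrite (psumr_nat_eq0 w0 w_sum0 lt_i) scale0r.
Qed.

Lemma pyramid_vertex : vertex D v.
Proof.
split; first exact: pyramid_v.
by exists (zR R hZ) => y Dy ne_yv; rewrite fh_v; apply: pyramid_fh_lt1.
Qed.

Lemma PhiM_vertex : vertex (PhiM M H) v.
Proof.
split; first exact: PhiM_v.
by exists (zR R hZ) => y /PhiM_sub_pyramid Dy ne_yv; rewrite fh_v; apply: pyramid_fh_lt1.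
Qed.

Lemma pyramid_fa y : D y -> fa y = 1.
Proof. by case/pyramid_natE=> l0 [w [_ [_ [w1 ->]]]]; rewrite fa_comb. Qed.

(* [Phi(x)]; the value for [a(x) = 0] is irrelevant since then [x = 0]. *)
Definition gen_proj (x : 'rV[int]_r) : vec :=
  if 0 < zdot aZ x then ((zdot aZ x)%:~R)^-1 *: zR R x else v.

Lemma PhiM_gen_proj x : x \in xs -> PhiM M H (gen_proj x).
Proof.
rewrite /gen_proj => x_in; case: ifP => ax; last exact: PhiM_v.
apply/PhiME; split; last by rewrite dotZr dot_zR mulVf // intr_eq0 gt_eqF.
by apply: gen_coneZ; [rewrite invr_ge0 ler0z ltW | apply/gen_cone_M/(mem_gens Mgen)].
Qed.

Lemma zR_gen_proj x : x \in xs -> zR R x = (zdot aZ x)%:~R *: gen_proj x.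
Proof.
rewrite /gen_proj => x_in; case: ifP => ax.
  by rewrite scalerA mulfV ?scale1r // intr_eq0 gt_eqF.
have a0 : zdot aZ x = 0 by apply/eqP; rewrite eq_le zdot_a_ge0 // andbT leNgt ax.
by rewrite a0 scale0r (zdot_a_eq0 x_in a0) zR0.
Qed.

Lemma base_point_sub_v y : y \in xs -> 0 < zdot gZ y ->
  bp y - v = ((zdot aZ y)%:~R / (c%:R * (zdot gZ y)%:~R)) *: (gen_proj y - v).
Proof.
move=> y_in gy; have cg_neq0 := base_denom_neq0 gy.
apply: (scalerI cg_neq0); rewrite scalerA mulrCA mulfV // mulr1 scalerBr.
have := scale_base_point y_in; rewrite /base_gen gy => ->.
rewrite scalerBr -zR_gen_proj // intr_zdot_a scalerDl.
by rewrite opprD addrA.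
Qed.

Lemma corner_PhiM_comb (mu : nat -> R) (P : nat -> vec) k :
  (forall i, 0 <= mu i) -> (forall i, (i < k)%N -> PhiM M H (P i)) ->
  corner (PhiM M H) v (\sum_(0 <= i < k) mu i *: (P i - v)).
Proof.
move=> mu0 PM; set S := \sum_(0 <= i < k) mu i.
have S_ge0 : 0 <= S by apply: sumr_ge0.
case: (eqVneq S 0) => [S0|Snz].
  exists 0, v; split => //; split; first exact: PhiM_v.
  rewrite scale0r big_nat_cond big1 // => i /andP [/andP [_ lt_i] _].
  by rewrite (psumr_nat_eq0 mu0 S0 lt_i) scale0r.
exists S, (S^-1 *: \sum_(0 <= i < k) mu i *: P i); split => //; split.
  apply/PhiME; split.
    apply: gen_coneZ; first by rewrite invr_ge0.
    by apply: gen_cone_sum => // i /PM /PhiME [].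
  rewrite dotZr dot_sumZr (eq_big_nat _ _ (F2 := mu)) ?mulVf // => i /andP [_ lt_i].
  by have /PhiME [_ ->] := PM i lt_i; rewrite mulr1.
rewrite scalerBr scalerA mulfV // scale1r.
by rewrite (eq_bigr _ (fun i _ => scalerBr _ _ _)) sumrB -scaler_suml.
Qed.

Lemma pyramid_corner y : D y -> corner (PhiM M H) v (y - v).
Proof.
case/pyramid_natE=> l0 [w [l00 [w0 [w1 ey]]]].
pose p i := base_gen gZ xstar xs`_i.
pose mu i := w i * ((zdot aZ (p i))%:~R / (c%:R * (zdot gZ (p i))%:~R)).
have mu0 i : 0 <= mu i.
  by rewrite mulr_ge0 // divr_ge0 ?mulr_ge0 // ler0z ltW ?zdot_a_base_gen ?zdot_g_base_gen.
have -> : y - v = \sum_(0 <= i < n) mu i *: (gen_proj (p i) - v).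
  have -> : y - v = \sum_(0 <= i < n) w i *: (Q i - v).
    rewrite ey (eq_bigr _ (fun i _ => scalerBr _ _ _)) sumrB -scaler_suml.
    have -> : l0 = 1 - \sum_(0 <= i < n) w i by rewrite -w1 addrK.
    by rewrite scalerBl scale1r addrAC (addrAC v) subrr add0r addrC.
  apply: eq_bigr => i _.
  by rewrite base_point_sub_v ?base_gen_nth ?zdot_g_base_gen // scalerA.
by apply: corner_PhiM_comb => // i _; apply/PhiM_gen_proj/base_gen_nth.
Qed.

Lemma corner_PhiM_pyramid : set_eq (corner (PhiM M H) v) (corner D v).
Proof.
move=> x; split; case=> t [y [t0 [Cy ->]]].
  by exists t, y; split => //; split => //; apply: PhiM_sub_pyramid.
have [t' [P [t'0 [PM ->]]]] := pyramid_corner Cy.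
by exists (t * t'), P; rewrite scalerA mulr_ge0.
Qed.

Lemma pyramid_rational : rational_pyramid H v base.
Proof.
split; first exact/hyperplaneE/fa_v.
split.
  move=> q /mapP [x x_in ->]; apply/hyperplaneE.
  exact/fa_base_point/zdot_g_base_gen.
case=> t [_ ev]; suff : fh v = 0 by rewrite fh_v => /eqP; rewrite oner_eq0.
rewrite ev dot_sumr big1 // => i _; rewrite dotZr.
have : (map (@qR R r) base)`_i \in map (@qR R r) base by rewrite mem_nth.
by case/mapP => q /mapP [x x_in ->] ->; rewrite fh_base_point mulr0.
Qed.

Lemma hyperplane_good : good_hyperplane R M (zQ aZ) 1.
Proof.
split.
  apply/eqP => a0; move: fa_v.
  have -> : zR R aZ = 0 by rewrite -qR_zQ a0; apply/rowP => i; rewrite !mxE rmorph0.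
  by rewrite dot0l => /eqP; rewrite eq_sym oner_eq0.
split; first exact: oner_neq0.
move=> x; split.
  move/cone_gen_coneE => [s [s0 ->]]; apply/cone_natE.
  exists (map gen_proj xs), (fun i => s i * (zdot aZ xs`_i)%:~R); split.
    by move=> y /mapP [x' x'_in ->]; apply: PhiM_gen_proj.
  split; first by move=> i; rewrite mulr_ge0 // ler0z zdot_nth_ge0 //; exact: zdot_a_ge0.
  rewrite size_map; apply: eq_big_nat => i /andP [_ lt_i].
  by rewrite (nth_map 0) // -scalerA -zR_gen_proj ?mem_nth.
by move=> Cx; apply/cone_gen_coneE; apply: cone_sub_gen_cone Cx => y /PhiME [].
Qed.

Lemma Phi_pt_v : Phi_pt H m v.
Proof.
move=> y; split.
  by case=> [[t [t0 ->]] /hyperplaneE]; rewrite dotZr fa_v mulr1 => ->; rewrite scale1r.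
move=> ->; split; first by exists 1; rewrite scale1r.
exact/hyperplaneE/fa_v.
Qed.

Definition apex_cone (u : vec) := exists l0 (w : nat -> R), 0 <= l0 /\
  (forall i, 0 <= w i) /\ u = l0 *: v + \sum_(0 <= i < n) w i *: Q i.

Definition base_cone (u : vec) := exists w : nat -> R, (forall i, 0 <= w i) /\
  u = \sum_(0 <= i < n) w i *: Q i.

Lemma apex_coneZ (k : R) u : 0 <= k -> apex_cone u -> apex_cone (k *: u).
Proof.
move=> k0 [l0 [w [l00 [w0 ->]]]]; exists (k * l0), (fun i => k * w i).
split; first by rewrite mulr_ge0.
split; first by move=> i; rewrite mulr_ge0.
by rewrite scalerDr scalerA scaler_sumr; congr (_ + _); apply: eq_bigr => i _; rewrite scalerA.
Qed.

Lemma base_coneZ (k : R) u : 0 <= k -> base_cone u -> base_cone (k *: u).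
Proof.
move=> k0 [w [w0 ->]]; exists (fun i => k * w i); split; first by move=> i; rewrite mulr_ge0.
by rewrite scaler_sumr; apply: eq_bigr => i _; rewrite scalerA.
Qed.

Lemma apex_coneD u1 u2 : apex_cone u1 -> apex_cone u2 -> apex_cone (u1 + u2).
Proof.
case=> [l1 [w1 [l10 [w10 ->]]]] [l2 [w2 [l20 [w20 ->]]]].
exists (l1 + l2), (fun i => w1 i + w2 i); split; first by rewrite addr_ge0.
split; first by move=> i; rewrite addr_ge0.
rewrite scalerDl (eq_bigr _ (fun i _ => scalerDl _ _ _)) big_split /=.
by rewrite -!addrA; congr (_ + _); rewrite addrCA.
Qed.

Lemma apex_cone_v : apex_cone v.
Proof.
exists 1, (fun _ => 0); split => //; split => //.
by rewrite big1 ?addr0 ?scale1r // => i _; rewrite scale0r.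
Qed.

Lemma base_cone_apex u : base_cone u -> apex_cone u.
Proof. by case=> w [w0 ->]; exists 0, w; rewrite scale0r add0r. Qed.

Lemma apex_cone_fa_gt0 u : apex_cone u -> u <> 0 -> 0 < fa u.
Proof.
case=> l0 [w [l00 [w0 eu]]] u_neq0; rewrite eu fa_comb lt_neqAle.
rewrite addr_ge0 ?sumr_ge0 // andbT; apply/eqP => /esym /eqP.
rewrite paddr_eq0 ?sumr_ge0 // => /andP [/eqP l0_0 /eqP w_sum0]; apply: u_neq0.
rewrite eu l0_0 scale0r add0r big_nat_cond big1 // => i /andP [/andP [_ lt_i] _].
by rewrite (psumr_nat_eq0 w0 w_sum0 lt_i) scale0r.
Qed.

Lemma pyramid_apex_coneE y : D y <-> apex_cone y /\ fa y = 1.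
Proof.
split.
  move=> Dy; split; last exact: pyramid_fa.
  by case/pyramid_natE: Dy => l0 [w [l00 [w0 [_ ey]]]]; exists l0, w.
case=> [[l0 [w [l00 [w0 ey]]]] fy]; apply/pyramid_natE; exists l0, w.
by rewrite -fy ey fa_comb.
Qed.

Lemma facet_base_coneE y : F y <-> base_cone y /\ fa y = 1.
Proof.
split.
  case/facet_natE=> w [w0 [w1 ey]]; split; first by exists w.
  by rewrite ey fa_sumQ.
case=> [[w [w0 ey]] fy]; apply/facet_natE; exists w.
by rewrite -fy ey fa_sumQ.
Qed.

Lemma normalize_fa u : 0 < fa u -> fa ((fa u)^-1 *: u) = 1.
Proof. by move=> fu; rewrite dotZr mulVf ?gt_eqF. Qed.

Lemma pyramid_normalizeE u : 0 < fa u -> D ((fa u)^-1 *: u) <-> apex_cone u.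
Proof.
move=> fu; rewrite pyramid_apex_coneE normalize_fa //; split => [[Cu _]|Cu].
  have -> : u = fa u *: ((fa u)^-1 *: u) by rewrite scalerA mulfV ?scale1r ?gt_eqF.
  by apply: apex_coneZ; rewrite ?ltW.
by split => //; apply: apex_coneZ; rewrite ?invr_ge0 ?ltW.
Qed.

Lemma facet_normalizeE u : 0 < fa u -> F ((fa u)^-1 *: u) <-> base_cone u.
Proof.
move=> fu; rewrite facet_base_coneE normalize_fa //; split => [[Cu _]|Cu].
  have -> : u = fa u *: ((fa u)^-1 *: u) by rewrite scalerA mulfV ?scale1r ?gt_eqF.
  by apply: base_coneZ; rewrite ?ltW.
by split => //; apply: base_coneZ; rewrite ?invr_ge0 ?ltW.
Qed.

Lemma MP_HE (P : vec -> Prop) z : MP H P z <->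
  z = 0 \/ (z <> 0 /\ 0 < fa (zR R z) /\ P ((fa (zR R z))^-1 *: zR R z)).
Proof. by rewrite MP_level1E qR_zQ. Qed.

(* The coefficient of the apex is [h(z)], an integer: this is where
   [h(m) = 1] and the integrality of [h] enter. *)
Lemma apex_cone_split z : apex_cone (zR R z) ->
  exists k : nat, base_cone (zR R (z - m *+ k)).
Proof.
case=> l0 [w [l00 [w0 ez]]].
have hz : (zdot hZ z)%:~R = l0 by rewrite -dot_zR ez fh_comb.
have hz_ge0 : 0 <= zdot hZ z by rewrite -(ler0z R) hz.
have k_eq : (`|zdot hZ z|%N)%:R = l0 :> R by rewrite -hz -{2}(gez0_abs hz_ge0).
exists `|zdot hZ z|%N, w; split => //.
by rewrite zRB zRMn ez -scaler_nat k_eq addrAC subrr add0r.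
Qed.

Lemma MP_pyramid z : MP H D z <-> exists (k : nat) w, MP H F w /\ z = m *+ k + w.
Proof.
rewrite MP_HE; split.
  case=> [->|[_ [fz /pyramid_normalizeE Cz]]].
    by exists 0%N, 0; rewrite mulr0n addr0; split => //; left.
  have [k Bw] := apex_cone_split (Cz fz); exists k, (z - m *+ k).
  split; last by rewrite addrC subrK.
  apply/MP_HE; case: (eqVneq (z - m *+ k) 0) => [->|w_neq0]; first by left.
  have w_neq0' : zR R (z - m *+ k) <> 0 by rewrite -zR0 => /zR_inj; apply/eqP.
  have fw := apex_cone_fa_gt0 (base_cone_apex Bw) w_neq0'.
  by right; split; [apply/eqP | split => //; apply/facet_normalizeE].
case=> k [w [/MP_HE Fw ->]].
case: (eqVneq (m *+ k + w) 0) => [->|z_neq0]; first by left.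
have Cz : apex_cone (zR R (m *+ k + w)).
  rewrite zRD zRMn -scaler_nat; apply: apex_coneD.
    by apply: apex_coneZ; rewrite ?ler0n //; exact: apex_cone_v.
  case: Fw => [->|[_ [fw /(facet_normalizeE fw) Bw]]]; last exact: base_cone_apex.
  by rewrite zR0 -(scale0r v); apply: apex_coneZ => //; exact: apex_cone_v.
have z_neq0' : zR R (m *+ k + w) <> 0 by rewrite -zR0 => /zR_inj; apply/eqP.
have fz := apex_cone_fa_gt0 Cz z_neq0'.
by right; split; [apply/eqP | split => //; apply/pyramid_normalizeE].
Qed.

Lemma facet_not_PhiM :
  (forall x, x \in xs -> zdot aZ x <= zdot hZ x *+ 2) -> forall y, F y -> ~ PhiM M H y.
Proof.
move=> a_le_2h y Fy /PhiME [[s [s0 ey]] fy].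
have fh0 : fh y = 0.
  by case/facet_natE: Fy => w [_ [_ ->]]; rewrite fh_sumQ.
suff : fa y <= 2 * fh y by rewrite fy fh0 mulr0 ler10.
rewrite ey !dot_sumZr mulr_sumr; apply: ler_sum => i _.
rewrite mulrCA ler_wpM2l // !dot_zR mulr_natl -rmorphMn ler_int.
case: (ltnP i n) => [lt_i|ge_i]; first by rewrite a_le_2h ?mem_nth.
by rewrite nth_default // !zdot0r.
Qed.

Hypothesis gp_full : forall z : 'rV[int]_r, exists x y, M x /\ M y /\ z = x - y.

Lemma span_gens_full : (fullv <= <<map (@zR R r) xs>>)%VS.
Proof.
have M_span z : M z -> zR R z \in <<map (@zR R r) xs>>%VS.
  case/Mgen => cf ->; rewrite zR_sum; apply: memv_suml => i _; rewrite zRMn.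
  by apply/rpredMn/memv_span/map_f/mem_nth.
apply/subvP => w _; rewrite [w]row_sum_delta; apply: memv_suml => k _.
apply: memvZ; have [x [y [Mx [My exy]]]] := gp_full (delta_mx 0 k).
have -> : delta_mx 0 k = zR R (delta_mx 0 k) by apply/rowP => j; rewrite !mxE rmorph_nat.
by rewrite exy zRB; apply: rpredB; apply: M_span.
Qed.

(* The points [gen_proj x] together with the apex span everything, so the
   differences [gen_proj x - v] span a space of dimension at least [r - 1]. *)
Lemma PhiM_aff_indep : aff_indep_in (PhiM M H) r.-1.
Proof.
pose X := [seq gen_proj x - v | x <- xs].
have gens_sub : (<<map (@zR R r) xs>> <= <<X>> + <[v]>)%VS.
  apply/span_subvP => w /mapP [x x_in ->].
  rewrite zR_gen_proj // -[gen_proj x](subrK v) scalerDr.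
  by apply: memv_add; apply: memvZ; [apply/memv_span/map_f | exact: memv_line].
have dimX : (r <= \dim <<X>> + 1)%N.
  have := dimvS (subv_trans span_gens_full gens_sub).
  rewrite dimvf dim_matrix mul1r => /leq_trans; apply.
  apply: leq_trans (dimv_add_leqif _ _) _.
  by rewrite leq_add2l dim_vline leq_b1.
have [Y [sYX [freeY sXY]]] := free_subseq_span X.
have sizeY : (r.-1 <= size Y)%N.
  have := dimvS sXY; move/eqP: (freeY) => -> /(leq_trans _); apply.
  by rewrite -subn1 leq_subLR addnC.
exists v, [seq y + v | y <- take r.-1 Y]; split; first exact: PhiM_v.
split.
  move=> p /mapP [y /mem_take /sYX /mapP [x x_in ->] ->]; rewrite subrK.
  exact: PhiM_gen_proj.
split; first by rewrite size_map size_takel.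
rewrite -map_comp (eq_map (g := id)); last by move=> y /=; rewrite addrK.
by rewrite map_id; move: freeY; rewrite -{1}(cat_take_drop r.-1 Y); exact: catl_free.
Qed.

Lemma tangent_pyramid : (0 < r)%N -> tangent (PhiM M H) D v.
Proof.
move=> r_gt0; have not_full C : (forall y, C y -> fa y = 1) -> ~ aff_indep_in C r.-1.+1.
  by rewrite prednK //; apply: (level_set_not_aff_indep (u := v)); rewrite fa_v oner_neq0.
split; first exact: PhiM_sub_pyramid.
split; first exact: PhiM_vertex.
split; first exact: pyramid_vertex.
split; last exact: corner_PhiM_pyramid.
exists r.-1; split; split.
- exact: PhiM_aff_indep.
- by apply: not_full => y /PhiME [].
- by apply: aff_indep_inS PhiM_aff_indep; exact: PhiM_sub_pyramid.
- exact/not_full/pyramid_fa.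
Qed.

Lemma pyramid_config : (0 < r)%N ->
  [/\ good_hyperplane R M (zQ aZ) 1, Phi_pt H m v, rational_pyramid H v base,
      tangent (PhiM M H) D v &
      forall z, MP H D z <-> exists (k : nat) w, MP H F w /\ z = m *+ k + w].
Proof.
move=> r_gt0; split; [exact: hyperplane_good | exact: Phi_pt_v | exact: pyramid_rational |
  exact: tangent_pyramid | exact: MP_pyramid].
Qed.

End Pyramid.

Section Separation.
Variables (R : realType) (r : nat) (M : 'rV[int]_r -> Prop) (xs : seq 'rV[int]_r).
Variable m : 'rV[int]_r.
Hypothesis Mgen : forall z, M z <->
  exists cf : 'I_(size xs) -> nat, z = \sum_(i < size xs) xs`_i *+ cf i.
Local Notation vec := 'rV[R]_r.

(* On the hyperplane, [G = l(v0) - l], which is positive on [Phi(M)] away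
   from [v0]. *)
Lemma extremal_separation (a0 : 'rV[rat]_r) (b0 : rat) (v0 l : vec) :
  b0 != 0 ->
  set_eq (cone (@imM R r M)) (cone (PhiM M (hyperplane a0 b0))) ->
  Phi_pt (hyperplane a0 b0) m v0 ->
  (forall y, PhiM M (hyperplane a0 b0) y -> y <> v0 -> dot l y < dot l v0) ->
  (forall z, M z -> (ray (zR R m) (zR R z) <-> exists k : nat, z = m *+ k)) ->
  exists G : vec, dot G (zR R m) = 0 /\
    forall x, x \in xs -> 0 < dot G (zR R x) \/ exists k : nat, x = m *+ k.
Proof.
move=> b0_neq0 cone_eq pt_v0 l_v0 ray_m.
have [[t [t0 ev0]] Hv0] := (pt_v0 v0).2 erefl.
set B : R := ratr b0.
have B_neq0 : B != 0 by rewrite fmorph_eq0.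
have a0v0 : dot (qR R a0) v0 = B := Hv0.
have t_neq0 : t != 0.
  apply: contra_neq B_neq0 => t_eq0.
  by rewrite -a0v0 ev0 t_eq0 scale0r dot0r.
pose G := (dot l v0 / B) *: qR R a0 - l.
have GH y : hyperplane a0 b0 y -> dot G y = dot l v0 - dot l y.
  by rewrite /hyperplane => Hy; rewrite dotBl dotZl Hy divfK.
have G_v0 : dot G v0 = 0 by rewrite GH // subrr.
have G_pos y : PhiM M (hyperplane a0 b0) y -> y <> v0 -> 0 < dot G y.
  by move=> Py ne_yv0; rewrite GH ?subr_gt0; [exact: l_v0 | case: Py].
have G_ge0 y : PhiM M (hyperplane a0 b0) y -> 0 <= dot G y.
  by move=> Py; case: (eqVneq y v0) => [->|/eqP /(G_pos _ Py) /ltW //]; rewrite G_v0.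
exists G; split.
  by move: G_v0; rewrite ev0 dotZr => /eqP; rewrite mulf_eq0 (negbTE t_neq0) => /eqP.
move=> x x_in; have Mx := mem_gens Mgen x_in.
have Cx : cone (PhiM M (hyperplane a0 b0)) (zR R x).
  apply/cone_eq; exists [:: zR R x], (fun _ => 1); split.
    by move=> y; rewrite inE => /eqP ->; exists x.
  by split => //; rewrite big_ord1 scale1r.
case: (eqVneq (dot G (zR R x)) 0) => [Gx0|Gx_neq0]; last first.
  by left; rewrite lt_neqAle eq_sym Gx_neq0 (cone_form_ge0 G_ge0).
right; apply/(ray_m x Mx).
have [s [s0 ->]] := cone_form_eq0 G_v0 G_pos Cx Gx0.
by exists (s * t); rewrite ev0 scalerA mulr_ge0.
Qed.

Definition l1norm (X : vec) : R := \sum_k `|X 0 k|.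

Lemma l1norm_ge0 X : 0 <= l1norm X.
Proof. exact: sumr_ge0. Qed.

Lemma dot_le_l1norm (E X : vec) : (forall k, `|E 0 k| <= 1) -> `|dot E X| <= l1norm X.
Proof.
move=> E1; apply: le_trans (ler_norm_sum _ _ _) _.
by apply: ler_sum => k _; rewrite normrM ler_piMl.
Qed.

Lemma floor_row_approx (G : vec) (N : R) :
  let E := zR R (\row_k Num.floor (N * G 0 k)) - N *: G in
  forall k, `|E 0 k| <= 1.
Proof.
move=> E k; rewrite !mxE ler_norml; have := floor_itv (N * G 0 k).
by rewrite rmorphD /= => /andP [lo hi]; apply/andP; split; lra.
Qed.

(* An integral form [f] close to [N G] is projected along [m] to
   [(m.m) f - (f.m) m], which stays integral and vanishes at [m]; for [N]
   large the error terms cannot change the sign on the generators. *)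
Lemma integral_separation (G : vec) : m != 0 -> dot G (zR R m) = 0 ->
  exists g, zdot g m = 0 /\
    forall x, x \in xs -> 0 < dot G (zR R x) -> 0 < zdot g x.
Proof.
move=> m_neq0 Gm.
pose err x := l1norm (zR R x) + l1norm (zR R m) * `|dot (zR R m) (zR R x)|.
pose B x := if 0 < dot G (zR R x) then Num.Def.archi_bound (err x / dot G (zR R x)) else 0%N.
pose N := \max_(x <- xs) B x.
pose f : 'rV[int]_r := \row_k Num.floor (N%:R * G 0 k).
exists (zdot m m *: f - zdot f m *: m); split.
  by rewrite -scaleNr zdotDl !zdotZl mulNr mulrC subrr.
move=> x x_in Gx.
have mm_ge1 : (1 : R) <= (zdot m m)%:~R by rewrite ler1z -[1]add0r lezD1 zdot_self_gt0.
pose E := zR R f - N%:R *: G.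
have fE y : dot (zR R f) y = N%:R * dot G y + dot E y.
  by rewrite /E dotBl dotZl addrC subrK.
have N_big : err x < N%:R * dot G (zR R x).
  rewrite -ltr_pdivrMr //; apply: (lt_le_trans (archi_boundP _)).
    by rewrite divr_ge0 ?addr_ge0 ?mulr_ge0 ?l1norm_ge0 // ltW.
  by rewrite ler_nat; have := @leq_bigmax_seq _ xs xpredT B x x_in isT; rewrite /B Gx.
have /ler_normlP [Ex_lo _] := dot_le_l1norm (zR R x) (floor_row_approx G N%:R).
have Em_m : dot E (zR R m) * dot (zR R m) (zR R x) <=
            l1norm (zR R m) * `|dot (zR R m) (zR R x)|.
  apply: le_trans (ler_norm _) _; rewrite normrM ler_wpM2r //.
  exact: dot_le_l1norm (floor_row_approx G N%:R).
have err_m_ge0 : 0 <= l1norm (zR R m) * `|dot (zR R m) (zR R x)|.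
  by rewrite mulr_ge0 ?l1norm_ge0.
have mm_scale : N%:R * dot G (zR R x) + dot E (zR R x) <=
   (zdot m m)%:~R * (N%:R * dot G (zR R x) + dot E (zR R x)).
  by rewrite ler_peMl //; rewrite /err in N_big; lra.
rewrite -scaleNr zdotDl !zdotZl mulNr -(ltr0z R) rmorphB !rmorphM /= -!dot_zR.
rewrite !fE Gm mulr0 add0r [dot (zR R m) (zR R m)]dot_zR.
rewrite /err in N_big; lra.
Qed.

End Separation.

Section IntegralForms.
Variable r : nat.
Implicit Types (m : 'rV[int]_r) (M : 'rV[int]_r -> Prop) (xs : seq 'rV[int]_r).

Lemma row_neq0_entry m : m != 0 -> exists j, m 0 j != 0.
Proof.
move=> m_neq0; case: (boolP [exists j, m 0 j != 0]) => [/existsP //|/existsPn m0].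
move/eqP: m_neq0; case; apply/rowP => j; rewrite mxE; apply/eqP.
by move: (m0 j); rewrite negbK.
Qed.

(* Euclidean descent on the positive values of integral forms at [m]: the
   least one divides every entry of [m]. *)
Lemma bezout_row m : m != 0 ->
  exists (d : nat) (h u : 'rV[int]_r), (0 < d)%N /\ zdot h m = d%:Z /\ m = u *+ d.
Proof.
move=> m_neq0.
suff descent n (h : 'rV[int]_r) : zdot h m = n.+1%:Z ->
    exists (d : nat) (h u : 'rV[int]_r), (0 < d)%N /\ zdot h m = d%:Z /\ m = u *+ d.
  have [j mj] := row_neq0_entry m_neq0.
  pose h := (if 0 < m 0 j then 1 else -1) *: delta_mx 0 j : 'rV[int]_r.
  have hm : zdot h m = (absz (m 0 j))%:Z.
    rewrite /h zdotZl zdot_delta abszE; case: ifP => mj_gt0.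
      by rewrite mul1r gtr0_norm.
    by rewrite mulN1r ltr0_norm // lt_neqAle mj leNgt mj_gt0.
  move: hm; case E: (absz (m 0 j)) => [|n]; last exact: descent.
  by move/eqP: E; rewrite absz_eq0 (negbTE mj).
elim/ltn_ind: n h => n IH h hm.
case: (boolP [forall j, m 0 j \in dvdz n.+1%:Z]) => [/forallP dvd_m|/forallPn [j ndvd]].
  exists n.+1, h, (\row_j (divz (m 0 j) n.+1%:Z)); split => //; split => //.
  by apply/rowP => j; rewrite mulmxnE mxE -mulr_natr natz divzK //; apply: dvd_m.
set q := divz (m 0 j) n.+1%:Z; set rho := modz (m 0 j) n.+1%:Z.
have rho_ge0 : 0 <= rho by apply: modz_ge0.
have rho_lt : rho < n.+1%:Z by apply: ltz_pmod.
have rho_neq0 : rho != 0 by apply: contra ndvd => /eqP rho0; apply/dvdz_mod0P.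
have rhoE : rho = (`|rho|%N)%:Z by rewrite gez0_abs.
have h'm : zdot (delta_mx 0 j - q *: h) m = rho.
  rewrite zdotDl -scaleN1r !zdotZl zdot_delta hm mulN1r.
  by rewrite {1}(divz_eq (m 0 j) n.+1%:Z) -/q -/rho addrAC subrr add0r.
move: h'm; rewrite rhoE; case E: `|rho|%N => [|k] h'm.
  by move: rho_neq0; rewrite rhoE E eqxx.
apply: (IH k) h'm; have : (k.+1 < n.+1)%N by rewrite -ltz_nat -E -rhoE.
by rewrite ltnS.
Qed.

(* By normality [m / d] lies in [M] and on the ray of [m], hence [d = 1]. *)
Lemma extremal_primitive (R : realType) M m :
  (forall z n, (0 < n)%N -> M (z *+ n) -> M z) -> M m ->
  (forall z, M z -> (ray (zR R m) (zR R z) <-> exists k : nat, z = m *+ k)) ->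
  m != 0 -> exists h, zdot h m = 1.
Proof.
move=> normal Mm ray_m m_neq0; have [d [h [u [d_gt0 [hm emd]]]]] := bezout_row m_neq0.
have Mu : M u by apply: (normal u d d_gt0); rewrite -emd.
have [k ek] : exists k : nat, u = m *+ k.
  apply/(ray_m u Mu); exists (d%:R)^-1; split; first by rewrite invr_ge0 ler0n.
  by rewrite emd zRMn -scaler_nat scalerA mulVf ?scale1r // pnatr_eq0 -lt0n.
have [j mj] := row_neq0_entry m_neq0.
have : m 0 j = m 0 j *+ (k * d).
  have e : m 0 j = (u *+ d) 0 j by rewrite -emd.
  by rewrite {1}e ek -mulrnA mulmxnE.
move/eqP; rewrite -mulr_natr natz -[X in X == _]mulr1 (inj_eq (mulfI mj)).
move=> /eqP [kd1]; move/esym/eqP: kd1; rewrite muln_eq1 => /andP [_ /eqP d1].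
by exists h; rewrite hm d1.
Qed.

(* If every generator lay on the ray of [m], then [gp(M)] would be [Z m],
   which has rank one. *)
Lemma exists_gen_off_ray M xs m g : (2 <= r)%N ->
  (forall z, M z <-> exists cf : 'I_(size xs) -> nat,
      z = \sum_(i < size xs) xs`_i *+ cf i) ->
  (forall z : 'rV[int]_r, exists x y, M x /\ M y /\ z = x - y) ->
  (forall x, x \in xs -> 0 < zdot g x \/ exists k : nat, x = m *+ k) ->
  exists2 xstar, xstar \in xs & 0 < zdot g xstar.
Proof.
move=> r_ge2 Mgen gp_full g_ray.
case: (boolP (has (fun x => 0 < zdot g x) xs)) => [/hasP [x x_in gx]|/hasPn g_le0].
  by exists x.
have on_ray x : x \in xs -> exists k : nat, x = m *+ k.
  by move=> x_in; case: (g_ray x x_in) => // gx; move: (g_le0 x x_in); rewrite gx.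
have M_ray z : M z -> exists k : nat, z = m *+ k.
  case/Mgen => cf ->; apply: (big_ind (fun z => exists k : nat, z = m *+ k)).
  - by exists 0%N; rewrite mulr0n.
  - by move=> a b [ka ->] [kb ->]; exists (ka + kb)%N; rewrite mulrnDr.
  - move=> i _; have [k ->] := on_ray _ (mem_nth 0 (ltn_ord i)).
    by exists (k * cf i)%N; rewrite mulrnA.
have delta_mul (k : 'I_r) : exists c : int,
    forall j, (delta_mx 0 k : 'rV[int]_r) 0 j = m 0 j * c.
  have [x [y [Mx [My exy]]]] := gp_full (delta_mx 0 k).
  have [a ea] := M_ray x Mx; have [b eb] := M_ray y My.
  exists (a%:Z - b%:Z) => j; rewrite exy ea eb mxE mxE mulmxnE mulmxnE.
  by rewrite -(mulr_natr (m 0 j) a) -(mulr_natr (m 0 j) b) !natz mulrBr.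
have i0 : (0 < r)%N by apply: leq_trans r_ge2.
have [c0 e0] := delta_mul (Ordinal i0); have [c1 e1] := delta_mul (Ordinal r_ge2).
have e00 := e0 (Ordinal i0); have e01 := e0 (Ordinal r_ge2).
have e10 := e1 (Ordinal i0); have e11 := e1 (Ordinal r_ge2).
rewrite !mxE /= in e00 e01 e10 e11.
move/esym/eqP: e10; rewrite mulf_eq0 => /orP [/eqP m0|/eqP c10].
  by move: e00; rewrite m0 mul0r.
by move: e11; rewrite c10 mulr0.
Qed.

Lemma shift_nonneg_on_gens xs m h0 g :
  zdot h0 m = 1 -> zdot g m = 0 ->
  (forall x, x \in xs -> 0 < zdot g x \/ exists k : nat, x = m *+ k) ->
  exists h, zdot h m = 1 /\ forall x, x \in xs -> 0 <= zdot h x.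
Proof.
move=> h0m gm g_ray; pose N := \max_(x <- xs) `|zdot h0 x|%N.
exists (h0 + g *+ N); split; first by rewrite zdotDl zdotMnl gm mul0rn addr0.
move=> x x_in; case: (g_ray x x_in) => [gx|[k ->]]; last first.
  by rewrite zdotMnr zdotDl zdotMnl h0m gm mul0rn addr0 mulrn_wge0.
rewrite zdotDl zdotMnl -[zdot h0 x]opprK addrC subr_ge0.
have h0_le : - zdot h0 x <= (`|zdot h0 x|%N)%:Z by rewrite abszE -normrN ler_norm.
have N_ge : (`|zdot h0 x|%N <= N)%N by apply: (@leq_bigmax_seq _ xs xpredT).
have g_ge : N%:Z <= zdot g x *+ N by rewrite -natz lerMn2r -[1]add0r lezD1 gx orbT.
by apply: le_trans h0_le (le_trans _ g_ge); rewrite lez_nat.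
Qed.

End IntegralForms.

Lemma extremal_level_forms (R : realType) r (M : 'rV[int]_r -> Prop) xs m :
  (2 <= r)%N ->
  (forall z, M z <-> exists cf : 'I_(size xs) -> nat,
      z = \sum_(i < size xs) xs`_i *+ cf i) ->
  (forall z : 'rV[int]_r, exists x y, M x /\ M y /\ z = x - y) ->
  (forall (z : 'rV[int]_r) (n : nat), (0 < n)%N -> M (z *+ n) -> M z) ->
  extremal_generator R M m ->
  exists h g xstar, [/\ zdot h m = 1, zdot g m = 0,
    forall x, x \in xs -> 0 < zdot g x \/ exists k : nat, x = m *+ k,
    forall x, x \in xs -> 0 <= zdot h x &
    xstar \in xs /\ 0 < zdot g xstar].
Proof.
move=> r_ge2 Mgen gp_full normal [Mm [[a0 [b0 [v0 [[_ [b0_neq0 cone_eq]] [pt_v0 [_ [l l_v0]]]]]]] ray_m]].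
have m_neq0 : m != 0.
  apply: contra_neq b0_neq0 => m0; have [[t [_ ev0]] Hv0] := (pt_v0 v0).2 erefl.
  by move: Hv0; rewrite /hyperplane ev0 m0 zR0 scaler0 dot0r => /esym /eqP; rewrite fmorph_eq0 => /eqP.
have [G [Gm G_ray]] := extremal_separation Mgen b0_neq0 cone_eq pt_v0 l_v0 ray_m.
have [g [gm g_pos]] := integral_separation xs m_neq0 Gm.
have g_ray x : x \in xs -> 0 < zdot g x \/ exists k : nat, x = m *+ k.
  by move=> x_in; case: (G_ray x x_in) => [/(g_pos x x_in)|]; [left | right].
have [h0 h0m] := extremal_primitive normal Mm ray_m m_neq0.
have [h [hm h_ge0]] := shift_nonneg_on_gens h0m gm g_ray.
have [xstar xstar_in g_xstar] := exists_gen_off_ray r_ge2 Mgen gp_full g_ray.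
by exists h, g, xstar.
Qed.

Lemma base_point_midpoint (R : realType) r (m h g y : 'rV[int]_r) :
  0 < zdot g y -> zdot g m = 0 ->
  qR R (base_pointQ m h g 2 y) = 2^-1 *: zR R m + 2^-1 *: qR R (base_pointQ m (h + g) g 1 y).
Proof.
move=> gy gm; rewrite !qR_base_point; set G : R := (zdot g y)%:~R.
have G_neq0 : G != 0 by rewrite intr_eq0 gt_eqF.
have G2_neq0 : 2 * G != 0 by rewrite mulf_neq0 // pnatr_eq0.
have e1 : 2 * G * 2^-1 = G by rewrite mulrAC mulfV ?mul1r // pnatr_eq0.
have e2 : 2 * G * (2^-1 / G) = 1 by rewrite mulrA e1 mulfV.
apply: (scalerI G2_neq0); rewrite !scalerA mulfV // scale1r mul1r.
rewrite scalerDr !scalerA e1 e2 scale1r zdotDl rmorphD /= -/G scalerDl opprD.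
by rewrite [RHS]addrC -[RHS]addrA subrK.
Qed.

Lemma pyramid_sub_halved (R : realType) r (xs : seq 'rV[int]_r) (m h g xstar : 'rV[int]_r) :
  zdot g m = 0 -> 0 < zdot g xstar ->
  forall y, pyramid (zR R m) (pyramid_base m h g 2 xstar xs) y ->
            pyramid (zR R m) (pyramid_base m (h + g) g 1 xstar xs) y.
Proof.
move=> gm g_xstar y; rewrite /pyramid !conv_cons_natE !size_map.
case=> l0 [w [l00 [w0 [w1 ->]]]].
exists (l0 + 2^-1 * \sum_(0 <= i < size xs) w i), (fun i => 2^-1 * w i).
split; first by rewrite addr_ge0 // mulr_ge0 // ?invr_ge0 ?ler0n // sumr_ge0.
split; first by move=> i; rewrite mulr_ge0 // invr_ge0 ler0n.
split; first by rewrite -mulr_sumr -addrA -mulrDl (_ : 2^-1 + 2^-1 = 1) ?mul1r //; lra.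
rewrite scalerDl -addrA; congr (_ + _).
rewrite mulr_sumr scaler_suml -big_split; apply: eq_big_nat => i /andP [_ lt_i] /=.
rewrite !(nth_map 0) ?size_map // base_point_midpoint //; last by rewrite /base_gen; case: ifP.
by rewrite scalerDr !scalerA [w i * _]mulrC.
Qed.

Unset Implicit Arguments. Set Strict Implicit.

Theorem lemma3p4 (R : realType) (r : nat) (M : 'rV[int]_r -> Prop)
    (m : 'rV[int]_r) :
  (2 <= r)%N ->
  affine_positive_normal M ->
  extremal_generator R M m ->
  admissible_configuration R M m.
Proof.
move=> r_ge2 [[xs Mgen] [gp_full [_ normal]]] ext_m.
have [h [g [xstar [hm gm g_ray h_ge0 [xstar_in g_xstar]]]]] :=
  extremal_level_forms r_ge2 Mgen gp_full normal ext_m.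
have Mm : M m by case: ext_m.
have r_gt0 : (0 < r)%N by apply: leq_trans r_ge2.
have h'm : zdot (h + g) m = 1 by rewrite zdotDl hm gm addr0.
have h'_ge0 x : x \in xs -> 0 <= zdot (h + g) x.
  move=> x_in; rewrite zdotDl addr_ge0 ?h_ge0 //.
  by case: (g_ray x x_in) => [/ltW //|[k ->]]; rewrite zdotMnr gm mul0rn.
pose a := h + g *+ 2.
have aE' : a = (h + g) + g *+ 1 by rewrite /a mulr2n mulr1n addrA.
have a_le : forall x, x \in xs -> zdot a x <= zdot (h + g) x *+ 2.
  by move=> x x_in; rewrite aE' mulr1n !zdotDl mulr2n lerD2l lerDr h_ge0.
have [good pt rat1 tan1 MP1] :=
  pyramid_config R Mgen Mm (isT : (0 < 2)%N) (erefl a) hm gm g_ray h_ge0 xstar_in g_xstar gp_full r_gt0.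
have [_ _ rat2 tan2 MP2] :=
  pyramid_config R Mgen Mm (isT : (0 < 1)%N) aE' h'm gm g_ray h'_ge0 xstar_in g_xstar gp_full r_gt0.
exists (zQ a), 1, (zR R m), (pyramid_base m h g 2 xstar xs), (pyramid_base m (h + g) g 1 xstar xs).
move=> /=; do 4!split => //.
split; first by case: tan1.
split; first exact: pyramid_sub_halved.
do 4!split => //; exact: facet_not_PhiM Mgen h'm a_le.
Qed.
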